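(* For $\nu\in\mathbb C$ and integers $m\ge0$, $0\le i\le\lfloor m/2\rfloor$, define $$a_i(\nu,m)=q^{-m(m+\nu)}q^{i(3i+\nu-1)}\frac{(-1)^i(q^{2\nu};q^2)_{m-i}(q^2;q^2)_{m-i}}{(q^2;q^2)_i(q^{2\nu};q^2)_i(q^2;q^2)_{m-2i}},$$ and for $m\ge1$, $0\le j\le\lfloor(m-1)/2\rfloor$, define $b_j(\nu,m)=-q^{2j-m-\nu}a_j(\nu+1,m-1)$ (i.e. $b_j(\nu,m+1)=-q^{2j-m-\nu-1}a_j(\nu+1,m)$). Then for every $\nu\in\mathbb C$ with $q^{2\nu+2i}\ne1$ for all integers $i\ge0$, every $m\ge0$ and every $x>0$, $$J_{\nu+m}(xq^m;q^2)=\sum_{i=0}^{\lfloor m/2\rfloor}\frac{a_i(\nu,m)}{x^{m-2i}}J_\nu(xq^i;q^2)+\sum_{j=0}^{\lfloor(m-1)/2\rfloor}\frac{b_j(\nu,m)}{x^{m-1-2j}}J_{\nu-1}(xq^j;q^2).$$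
   Context: Fix $0<q<1$; $(a;q)_0=1$, $(a;q)_k=\prod_{i=0}^{k-1}(1-aq^i)$, $(a;q)_\infty=\prod_{i\ge0}(1-aq^i)$. For $\nu\in\mathbb C$ and $x>0$ the Hahn–Exton $q$-Bessel function is $$J_\nu(x;q^2)=\frac{x^\nu}{(q^2;q^2)_\infty}\sum_{k=0}^\infty\frac{(-1)^kq^{k(k+1)}(q^{2\nu+2k+2};q^2)_\infty}{(q^2;q^2)_k}\,x^{2k}.$$ $\lfloor a\rfloor$ is the largest integer $\le a$; empty sums are zero. *)

From Stdlib Require Import Reals List.
From Coquelicot Require Import Coquelicot.
Open Scope R_scope.

(* Limit of a complex sequence, taken componentwise (Lim_seq of real and
   imaginary parts).  Equals the true limit whenever the sequence converges. *)
Definition CLim_seq (u : nat -> C) : C :=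
  (real (Lim_seq (fun n => Re (u n))), real (Lim_seq (fun n => Im (u n)))).

Definition csum (n : nat) (f : nat -> C) : C :=
  fold_right Cplus (RtoC 0) (map f (seq 0 n)).

Definition cprod (n : nat) (f : nat -> C) : C :=
  fold_right Cmult (RtoC 1) (map f (seq 0 n)).

Definition cseries (f : nat -> C) : C := CLim_seq (fun n => csum n f).

(* complex power b^z = exp(z ln b) of a positive real base b *)
Definition cpowR (b : R) (z : C) : C :=
  Cmult (RtoC (exp (Re z * ln b)))
        (cos (Im z * ln b), sin (Im z * ln b)).

Definition qpoch (a : C) (p : R) (k : nat) : C :=
  cprod k (fun i => Cminus (RtoC 1) (Cmult a (RtoC (p ^ i)))).

Definition qpoch_inf (a : C) (p : R) : C := CLim_seq (fun k => qpoch a p k).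

Definition HEJ (q : R) (nu : C) (x : R) : C :=
  Cmult (Cdiv (cpowR x nu) (qpoch_inf (RtoC (q ^ 2)) (q ^ 2)))
    (cseries (fun k =>
       Cmult (Cdiv (Cmult (RtoC ((-1) ^ k * q ^ (k * (k + 1))))
                          (qpoch_inf (cpowR q (Cplus (Cmult (RtoC 2) nu)
                                                      (RtoC (INR (2 * k + 2)))))
                                     (q ^ 2)))
                   (qpoch (RtoC (q ^ 2)) (q ^ 2) k))
             (RtoC (x ^ (2 * k))))).

Definition coef_a (q : R) (nu : C) (m i : nat) : C :=
  let q2nu := cpowR q (Cmult (RtoC 2) nu) in
  Cmult (cpowR q (Copp (Cmult (RtoC (INR m)) (Cplus (RtoC (INR m)) nu))))
  (Cmult (cpowR q (Cmult (RtoC (INR i))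
                         (Cplus (RtoC (3 * INR i - 1)) nu)))
   (Cdiv (Cmult (RtoC ((-1) ^ i))
                (Cmult (qpoch q2nu (q ^ 2) (m - i))
                       (qpoch (RtoC (q ^ 2)) (q ^ 2) (m - i))))
         (Cmult (qpoch (RtoC (q ^ 2)) (q ^ 2) i)
                (Cmult (qpoch q2nu (q ^ 2) i)
                       (qpoch (RtoC (q ^ 2)) (q ^ 2) (m - 2 * i)))))).

Definition coef_b (q : R) (nu : C) (m j : nat) : C :=
  Copp (Cmult (cpowR q (Cminus (RtoC (2 * INR j - INR m)) nu))
              (coef_a q (Cplus nu (RtoC 1)) (m - 1) j)).

From Stdlib Require Import Reals List Lia Lra.
From Coquelicot Require Import Coquelicot.
Open Scope R_scope.

(** Induction on [m], passing from [(nu, m + 1, x)] to [(nu + 1, m, x q)].  The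
    Hahn-Exton function satisfies the contiguous relation
    [q^(nu+1) J_(nu+1)(y q) = (1 - q^(2 nu)) / y * J_nu(y) - J_(nu-1)(y)],
    which holds termwise in its series because
    [(a;q^2)_oo = (1 - a) (a q^2;q^2)_oo].  Applying the induction hypothesis at
    [(nu + 1, x q)] and then this relation to every [J_(nu+1)(x q^(i+1))] writes
    [J_(nu+m+1)(x q^(m+1))] through the [J_nu(x q^i)] and [J_(nu-1)(x q^j)].  The
    coefficients of the [J_(nu-1)] are the new [b_j] by definition, and the
    coefficient of [J_nu(x q^i)] collects [a_i(nu+1, m)] and [b_(i-1)(nu+1, m)]:
    that it equals [a_i(nu, m+1)] is a Pascal-type identity between the
    Pochhammer factors.  The series and infinite products involved converge
    because their increments are dominated by summable sequences. *)

Lemma fold_right_Cplus_init (l : list C) (c : C) :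
  fold_right Cplus c l = (fold_right Cplus 0 l + c)%C.
Proof. induction l as [|a l IH]; simpl; [ring | rewrite IH; ring]. Qed.

Lemma fold_right_Cmult_init (l : list C) (c : C) :
  fold_right Cmult c l = (fold_right Cmult 1 l * c)%C.
Proof. induction l as [|a l IH]; simpl; [ring | rewrite IH; ring]. Qed.

Lemma csum_S n f : csum (S n) f = (csum n f + f n)%C.
Proof.
  unfold csum. rewrite seq_S, map_app, fold_right_app; simpl.
  rewrite fold_right_Cplus_init. f_equal. ring.
Qed.

Lemma cprod_S n f : cprod (S n) f = (cprod n f * f n)%C.
Proof.
  unfold cprod. rewrite seq_S, map_app, fold_right_app; simpl.
  rewrite fold_right_Cmult_init. f_equal. ring.
Qed.

Lemma csum_ext n f g : (forall i, (i < n)%nat -> f i = g i) -> csum n f = csum n g.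
Proof. induction n; intros H; [reflexivity | rewrite !csum_S, IHn, H; auto]. Qed.

Lemma csum_plus n f g : csum n (fun i => f i + g i)%C = (csum n f + csum n g)%C.
Proof.
  induction n; [unfold csum; simpl; ring |].
  rewrite !csum_S, IHn. ring.
Qed.

Lemma csum_scal n c f : csum n (fun i => c * f i)%C = (c * csum n f)%C.
Proof.
  induction n; [unfold csum; simpl; ring |].
  rewrite !csum_S, IHn. ring.
Qed.

Lemma csum_Sl n f : csum (S n) f = (f 0%nat + csum n (fun i => f (S i)))%C.
Proof.
  induction n; [unfold csum; simpl; ring |].
  rewrite csum_S, IHn, (csum_S n). ring.
Qed.

Lemma csum_plus_shift n f g :
  csum (S n) (fun i => f i + match i with O => 0 | S j => g j end)%C =
  (csum (S n) f + csum n g)%C.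
Proof.
  rewrite csum_plus, (csum_Sl n (fun i => match i with O => 0 | S j => g j end)%C).
  now rewrite Cplus_0_l.
Qed.

Lemma csum_if_trunc n N (P : nat -> bool) (f : nat -> C) :
  (n <= N)%nat -> (forall i, (i < N)%nat -> P i = true <-> (i < n)%nat) ->
  csum N (fun i => if P i then f i else 0%C) = csum n f.
Proof.
  intros HnN HP. induction N as [|N IH].
  - replace n with 0%nat by lia. reflexivity.
  - destruct (Nat.eq_dec n (S N)) as [-> | Hn].
    + apply csum_ext. intros i Hi. now replace (P i) with true by (symmetry; apply HP; lia).
    + rewrite csum_S, IH by (lia || (intros i Hi; apply HP; lia)).
      destruct (P N) eqn:E; [apply HP in E; lia | ring].
Qed.

Lemma exp_le_compat x y : x <= y -> exp x <= exp y.
Proof. intros [H | ->]; [left; now apply exp_increasing | lra]. Qed.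

Lemma Rabs_Im_le_Cmod z : Rabs (Im z) <= Cmod z.
Proof.
  assert (H := Cmod2_alt z). assert (H0 := Cmod_ge_0 z).
  assert (E := pow2_abs (Im z)). assert (H1 := Rabs_pos (Im z)). simpl in *. nra.
Qed.

Lemma RtoC_pow_neq0 (x : R) n : x <> 0 -> RtoC (x ^ n) <> 0%C.
Proof. intros Hx E. apply RtoC_inj in E. revert E. now apply pow_nonzero. Qed.

Lemma RtoC_one_minus_pow_neq0 q n : 0 < q < 1 -> (0 < n)%nat -> (1 - (q ^ n)%R)%C <> 0%C.
Proof.
  intros Hq Hn E. rewrite <- RtoC_minus in E. apply RtoC_inj in E.
  assert (H := pow_lt_1_compat q n ltac:(lra) Hn). lra.
Qed.

Lemma Cmult_eq_Cdiv (c x y : C) : c <> 0%C -> (c * x)%C = y -> x = (y / c)%C.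
Proof. intros Hc <-. field. exact Hc. Qed.

Lemma Nat_half_bounds m : (2 * (m / 2) <= m <= 2 * (m / 2) + 1)%nat.
Proof. pose proof (Nat.div_mod m 2) as E. pose proof (Nat.mod_upper_bound m 2). lia. Qed.

(** * Limits of complex sequences *)

(** [CLim_seq] takes [Lim_seq] of both components, which is a junk value for
    divergent sequences; every series and infinite product below is therefore
    first shown to converge in this sense. *)
Definition is_Clim_seq (u : nat -> C) (l : C) : Prop :=
  is_lim_seq (fun n => Re (u n)) (Re l) /\ is_lim_seq (fun n => Im (u n)) (Im l).

Lemma CLim_seq_correct u l : is_Clim_seq u l -> CLim_seq u = l.
Proof.
  intros [Hre Him]. unfold CLim_seq.
  rewrite (is_lim_seq_unique _ _ Hre), (is_lim_seq_unique _ _ Him).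
  destruct l; reflexivity.
Qed.

Lemma is_Clim_seq_ext u v l : (forall n, u n = v n) -> is_Clim_seq u l -> is_Clim_seq v l.
Proof.
  intros E [Hre Him]; split;
    eapply is_lim_seq_ext; try eassumption; intros n; simpl; rewrite E; reflexivity.
Qed.

Lemma is_Clim_seq_plus u v a b :
  is_Clim_seq u a -> is_Clim_seq v b -> is_Clim_seq (fun n => u n + v n)%C (a + b)%C.
Proof. intros [H1 H2] [H3 H4]; split; simpl; apply is_lim_seq_plus'; assumption. Qed.

Lemma is_Clim_seq_scal c u a :
  is_Clim_seq u a -> is_Clim_seq (fun n => c * u n)%C (c * a)%C.
Proof.
  intros [H1 H2]; split; simpl.
  - apply is_lim_seq_minus'; apply is_lim_seq_mult'; auto using is_lim_seq_const.
  - apply is_lim_seq_plus'; apply is_lim_seq_mult'; auto using is_lim_seq_const.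
Qed.

Lemma is_Clim_seq_incr_1 u l : is_Clim_seq u l <-> is_Clim_seq (fun n => u (S n)) l.
Proof.
  split; intros [H1 H2]; split;
    apply (is_lim_seq_incr_1 (fun n => _ (u n))); assumption.
Qed.

Lemma is_Clim_seq_Cmod u l : is_Clim_seq u l -> is_lim_seq (fun n => Cmod (u n)) (Cmod l).
Proof.
  intros [Hre Him]. unfold Cmod.
  apply is_lim_seq_continuous.
  - apply continuity_pt_sqrt. nra.
  - apply is_lim_seq_plus'; simpl; repeat apply is_lim_seq_mult'; auto using is_lim_seq_const.
Qed.

Lemma is_Clim_seq_Cmod_le u l B :
  is_Clim_seq u l -> (forall n, Cmod (u n) <= B) -> Cmod l <= B.
Proof.
  intros Hl HB.
  exact (is_lim_seq_le _ _ _ _ HB (is_Clim_seq_Cmod _ _ Hl) (is_lim_seq_const B)).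
Qed.

Lemma ex_lim_seq_summable_increments (u e : nat -> R) :
  (forall n, Rabs (u (S n) - u n) <= e n) -> ex_series e -> exists l : R, is_lim_seq u l.
Proof.
  intros Hd He.
  destruct (ex_series_le (K := R_AbsRing) (V := R_CompleteNormedModule)
              (fun n => u (S n) - u n) e Hd He) as [s Hs].
  exists (u 0%nat + s).
  apply is_lim_seq_incr_1.
  apply (is_lim_seq_ext (fun n => u 0%nat + sum_n (fun k => u (S k) - u k) n)).
  - intros n. induction n as [|n IH].
    + rewrite sum_O. ring.
    + rewrite sum_Sn. unfold plus in *; simpl in *. lra.
  - apply is_lim_seq_plus'; [apply is_lim_seq_const | exact Hs].
Qed.

Lemma is_Clim_seq_summable_increments (u : nat -> C) (e : nat -> R) :
  (forall n, Cmod (u (S n) - u n) <= e n) -> ex_series e -> exists l, is_Clim_seq u l.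
Proof.
  intros Hd He.
  destruct (ex_lim_seq_summable_increments (fun n => Re (u n)) e) as [a Ha]; auto.
  { intros n. eapply Rle_trans; [| apply Hd]. apply (re_le_Cmod (u (S n) - u n)%C). }
  destruct (ex_lim_seq_summable_increments (fun n => Im (u n)) e) as [b Hb]; auto.
  { intros n. eapply Rle_trans; [| apply Hd]. apply (Rabs_Im_le_Cmod (u (S n) - u n)%C). }
  exists (a, b). split; assumption.
Qed.

Lemma cpowR_add b z w : cpowR b (z + w)%C = (cpowR b z * cpowR b w)%C.
Proof.
  destruct z as [a1 b1], w as [a2 b2]. unfold cpowR, Cmult, Cplus, RtoC; simpl.
  rewrite !Rmult_plus_distr_r, exp_plus, cos_plus, sin_plus.
  apply injective_projections; simpl; ring.
Qed.

Lemma cpowR_mult_base x y z :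
  0 < x -> 0 < y -> cpowR (x * y) z = (cpowR x z * cpowR y z)%C.
Proof.
  intros Hx Hy. destruct z as [a b]. unfold cpowR, Cmult, RtoC; simpl.
  rewrite ln_mult by assumption.
  rewrite !Rmult_plus_distr_l, exp_plus, cos_plus, sin_plus.
  apply injective_projections; simpl; ring.
Qed.

Lemma cpowR_RtoC b r : cpowR b (RtoC r) = RtoC (exp (r * ln b)).
Proof.
  unfold cpowR, Cmult, RtoC; simpl. rewrite Rmult_0_l, cos_0, sin_0.
  apply injective_projections; simpl; ring.
Qed.

Lemma cpowR_INR b n : 0 < b -> cpowR b (RtoC (INR n)) = RtoC (b ^ n).
Proof. intros Hb. rewrite cpowR_RtoC, <- Rpower_pow by assumption. reflexivity. Qed.

Lemma cpowR_0 b : cpowR b 0 = 1.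
Proof. rewrite cpowR_RtoC, Rmult_0_l, exp_0. reflexivity. Qed.

Lemma cpowR_1 b : 0 < b -> cpowR b 1 = RtoC b.
Proof. intros Hb. rewrite cpowR_RtoC, Rmult_1_l, exp_ln by assumption. reflexivity. Qed.

Lemma cpowR_Cmod b z : Cmod (cpowR b z) = exp (Re z * ln b).
Proof.
  unfold cpowR. rewrite Cmod_mult, Cmod_R, Rabs_pos_eq by (left; apply exp_pos).
  replace (Cmod (cos (Im z * ln b), sin (Im z * ln b))) with 1.
  - apply Rmult_1_r.
  - assert (E := sin2_cos2 (Im z * ln b)). unfold Rsqr in E.
    unfold Cmod; simpl. replace (_ + _) with 1 by nra. now rewrite sqrt_1.
Qed.

Lemma cpowR_neq0 b z : cpowR b z <> 0%C.
Proof.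
  intros H. assert (Hc := cpowR_Cmod b z). rewrite H, Cmod_0 in Hc.
  generalize (exp_pos (Re z * ln b)); lra.
Qed.


Ltac solve_exponent :=
  repeat progress rewrite ?plus_INR, ?mult_INR, ?S_INR, ?minus_INR by lia;
  apply injective_projections; simpl; ring.

Lemma cpowR_2_succ q nu : 0 < q -> cpowR q (2 * (nu + 1))%C = (cpowR q (2 * nu) * (q ^ 2)%R)%C.
Proof. intros Hq. rewrite <- cpowR_INR, <- cpowR_add by assumption. f_equal. solve_exponent. Qed.

(** * q-Pochhammer symbols *)

Lemma qpoch_S a p n : qpoch a p (S n) = (qpoch a p n * (1 - a * (p ^ n)%R))%C.
Proof. apply cprod_S. Qed.

Lemma qpoch_Sl a p n : qpoch a p (S n) = ((1 - a) * qpoch (a * p) p n)%C.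
Proof.
  induction n as [|n IH].
  - rewrite qpoch_S. unfold qpoch, cprod; simpl. ring.
  - rewrite qpoch_S, IH, (qpoch_S _ p n). simpl. rewrite RtoC_mult. ring.
Qed.

Lemma qpoch_Sl_inv a (p : R) n :
  (1 - a)%C <> 0%C -> qpoch (a * p) p n = (qpoch a p n * (1 - a * (p ^ n)%R) / (1 - a))%C.
Proof. intros Ha. rewrite <- qpoch_S, qpoch_Sl. field. exact Ha. Qed.

Lemma qpoch_neq0 a p n : (forall k, (1 - a * (p ^ k)%R)%C <> 0%C) -> qpoch a p n <> 0%C.
Proof.
  intros Ha. induction n as [|n IH].
  - intros E. apply RtoC_inj in E. lra.
  - rewrite qpoch_S. now apply Cmult_neq_0.
Qed.

Lemma qpoch_Cmod_le a p n : 0 <= p < 1 -> Cmod (qpoch a p n) <= exp (Cmod a / (1 - p)).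
Proof.
  intros Hp.
  assert (Hn : Cmod (qpoch a p n) <= exp (Cmod a * (1 - p ^ n) / (1 - p))).
  { induction n as [|n IH].
    - unfold qpoch, cprod; simpl. rewrite Cmod_1. unfold Rdiv.
      rewrite Rminus_diag, Rmult_0_r, Rmult_0_l, exp_0. lra.
    - rewrite qpoch_S, Cmod_mult.
      assert (Hf : Cmod (1 - a * (p ^ n)%R)%C <= exp (Cmod a * p ^ n)).
      { eapply Rle_trans; [| apply exp_ineq1_le].
        unfold Cminus. eapply Rle_trans; [apply Cmod_triangle |].
        rewrite Cmod_opp, Cmod_mult, Cmod_1, Cmod_R, Rabs_pos_eq by (apply pow_le; lra).
        lra. }
      replace (Cmod a * (1 - p ^ S n) / (1 - p))
        with (Cmod a * (1 - p ^ n) / (1 - p) + Cmod a * p ^ n) by (simpl; field; lra).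
      rewrite exp_plus. apply Rmult_le_compat; auto using Cmod_ge_0. }
  eapply Rle_trans; [exact Hn |]. apply exp_le_compat.
  assert (0 <= p ^ n) by (apply pow_le; lra). assert (0 <= Cmod a) by apply Cmod_ge_0.
  unfold Rdiv. apply Rmult_le_compat_r; [left; apply Rinv_0_lt_compat; lra | nra].
Qed.

Lemma qpoch_inf_correct a p : 0 <= p < 1 -> is_Clim_seq (qpoch a p) (qpoch_inf a p).
Proof.
  intros Hp.
  destruct (is_Clim_seq_summable_increments (qpoch a p)
              (fun n => exp (Cmod a / (1 - p)) * Cmod a * p ^ n)) as [l Hl].
  - intros n. rewrite qpoch_S.
    replace (qpoch a p n * (1 - a * (p ^ n)%R) - qpoch a p n)%C
      with (- (qpoch a p n * (a * (p ^ n)%R)))%C by ring.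
    rewrite Cmod_opp, !Cmod_mult, Cmod_R, Rabs_pos_eq by (apply pow_le; lra).
    rewrite Rmult_assoc. apply Rmult_le_compat_r.
    + apply Rmult_le_pos; [apply Cmod_ge_0 | apply pow_le; lra].
    + now apply qpoch_Cmod_le.
  - apply (ex_series_scal_l (K := R_AbsRing) (V := R_NormedModule)
             (exp (Cmod a / (1 - p)) * Cmod a) (fun n => p ^ n)).
    apply ex_series_geom. rewrite Rabs_pos_eq; lra.
  - now replace (qpoch_inf a p) with l by (symmetry; exact (CLim_seq_correct _ _ Hl)).
Qed.

Lemma qpoch_inf_Sl a p : 0 <= p < 1 -> qpoch_inf a p = ((1 - a) * qpoch_inf (a * p) p)%C.
Proof.
  intros Hp.
  assert (H := is_Clim_seq_scal (1 - a) _ _ (qpoch_inf_correct (a * p) p Hp)).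
  apply (is_Clim_seq_ext _ (fun n => qpoch a p (S n))) in H;
    [| intros n; symmetry; apply qpoch_Sl].
  apply (is_Clim_seq_incr_1 (qpoch a p)), CLim_seq_correct in H. exact H.
Qed.

Lemma qpoch_inf_Cmod_le a p : 0 <= p < 1 -> Cmod (qpoch_inf a p) <= exp (Cmod a / (1 - p)).
Proof.
  intros Hp. apply (is_Clim_seq_Cmod_le (qpoch a p)).
  - now apply qpoch_inf_correct.
  - intros n. now apply qpoch_Cmod_le.
Qed.

Lemma qpoch_diag_Cmod_ge p n : 0 < p < 1 -> (1 - p) ^ n <= Cmod (qpoch (RtoC p) p n).
Proof.
  intros Hp. induction n as [|n IH].
  - unfold qpoch, cprod; simpl. rewrite Cmod_1. lra.
  - rewrite qpoch_S, Cmod_mult, <- RtoC_mult, <- RtoC_minus, Cmod_R, <- tech_pow_Rmult.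
    assert (Hpn : 0 <= p ^ n <= 1)
      by (split; [apply pow_le | rewrite <- (pow1 n); apply pow_incr]; lra).
    rewrite Rabs_pos_eq by nra. rewrite Rmult_comm.
    apply Rmult_le_compat; try apply pow_le; nra.
Qed.

Lemma qpoch_diag_neq0 p n : 0 < p < 1 -> qpoch (RtoC p) p n <> 0%C.
Proof.
  intros Hp E. assert (H := qpoch_diag_Cmod_ge p n Hp). rewrite E, Cmod_0 in H.
  assert (0 < (1 - p) ^ n) by (apply pow_lt; lra). lra.
Qed.

(** * The series of the Hahn-Exton function *)

Definition hej_coef (q : R) (nu : C) (k : nat) : C :=
  (RtoC ((-1) ^ k * q ^ (k * (k + 1)))
   * qpoch_inf (cpowR q (2 * nu + RtoC (INR (2 * k + 2)))) (q ^ 2)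
   / qpoch (RtoC (q ^ 2)) (q ^ 2) k)%C.

Definition hej_term (q : R) (nu : C) (x : R) (k : nat) : C :=
  (hej_coef q nu k * RtoC (x ^ (2 * k)))%C.

Lemma HEJ_series q nu x :
  HEJ q nu x = (cpowR x nu / qpoch_inf (RtoC (q ^ 2)) (q ^ 2) * cseries (hej_term q nu x))%C.
Proof. reflexivity. Qed.

Lemma ex_series_q_gaussian q y :
  0 < q < 1 -> 0 < y -> ex_series (fun k => q ^ (k * (k + 1)) * y ^ k).
Proof.
  intros Hq Hy.
  apply (ex_series_ext (fun k => Rabs (q ^ (k * (k + 1)) * y ^ k))).
  { intros k. apply Rabs_pos_eq, Rmult_le_pos; apply pow_le; lra. }
  apply (ex_series_DAlembert (fun k => q ^ (k * (k + 1)) * y ^ k) 0); [lra | |].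
  { intros k. apply Rmult_integral_contrapositive; split; apply pow_nonzero; lra. }
  apply (is_lim_seq_ext (fun k => (q ^ 2) ^ (S k) * y)).
  { intros k.
    assert (q ^ (k * (k + 1)) <> 0) by (apply pow_nonzero; lra).
    assert (y ^ k <> 0) by (apply pow_nonzero; lra).
    replace (q ^ (S k * (S k + 1)) * y ^ S k / (q ^ (k * (k + 1)) * y ^ k))
      with ((q ^ 2) ^ S k * y).
    - rewrite Rabs_pos_eq; [reflexivity | apply Rmult_le_pos; [apply pow_le |]; nra].
    - replace (S k * (S k + 1))%nat with (k * (k + 1) + 2 * S k)%nat by lia.
      rewrite pow_add, (pow_mult q 2 (S k)), <- !tech_pow_Rmult. field. auto. }
  replace (Finite 0) with (Rbar_mult 0 y) by (simpl; f_equal; ring).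
  apply (is_lim_seq_scal_r (fun k => (q ^ 2) ^ (S k))).
  apply (is_lim_seq_incr_1 (fun k => (q ^ 2) ^ k)), is_lim_seq_geom.
  rewrite Rabs_pos_eq; nra.
Qed.

Lemma hej_coef_Cmod_le q nu k :
  0 < q < 1 ->
  Cmod (hej_coef q nu k) <=
  exp (Cmod (cpowR q (2 * nu)) / (1 - q ^ 2)) * (q ^ (k * (k + 1)) * (/ (1 - q ^ 2)) ^ k).
Proof.
  intros Hq.
  assert (HQ : 0 <= q ^ 2 < 1) by (split; nra).
  assert (Hpoch := qpoch_diag_Cmod_ge (q ^ 2) k ltac:(nra)).
  assert (Hpos : 0 < (1 - q ^ 2) ^ k) by (apply pow_lt; nra).
  set (K := exp (Cmod (cpowR q (2 * nu)) / (1 - q ^ 2))).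
  assert (Hinf : Cmod (qpoch_inf (cpowR q (2 * nu + RtoC (INR (2 * k + 2)))) (q ^ 2)) <= K).
  { eapply Rle_trans; [now apply qpoch_inf_Cmod_le |]. apply exp_le_compat.
    unfold Rdiv. apply Rmult_le_compat_r; [left; apply Rinv_0_lt_compat; lra |].
    rewrite cpowR_add, Cmod_mult, cpowR_INR, Cmod_R, Rabs_pos_eq by (try apply pow_le; lra).
    assert (q ^ (2 * k + 2) <= 1) by (rewrite <- (pow1 (2 * k + 2)); apply pow_incr; lra).
    assert (0 <= Cmod (cpowR q (2 * nu))) by apply Cmod_ge_0. nra. }
  unfold hej_coef, Cdiv.
  rewrite !Cmod_mult, Cmod_inv by (apply qpoch_diag_neq0; nra).
  rewrite Cmod_R, Rabs_mult, pow_1_abs, Rmult_1_l, Rabs_pos_eq by (apply pow_le; lra).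
  rewrite pow_inv.
  assert (0 <= q ^ (k * (k + 1))) by (apply pow_le; lra).
  assert (/ Cmod (qpoch (RtoC (q ^ 2)) (q ^ 2) k) <= / (1 - q ^ 2) ^ k)
    by (apply Rinv_le_contravar; assumption).
  assert (0 <= / Cmod (qpoch (RtoC (q ^ 2)) (q ^ 2) k)) by (left; apply Rinv_0_lt_compat; lra).
  assert (0 <= Cmod (qpoch_inf (cpowR q (2 * nu + RtoC (INR (2 * k + 2)))) (q ^ 2)))
    by apply Cmod_ge_0.
  rewrite Rmult_assoc, (Rmult_comm K), Rmult_assoc.
  apply Rmult_le_compat_l; [assumption |].
  rewrite Rmult_comm. apply Rmult_le_compat; assumption.
Qed.

Lemma hej_series_correct q nu x :
  0 < q < 1 -> 0 < x ->
  is_Clim_seq (fun n => csum n (hej_term q nu x)) (cseries (hej_term q nu x)).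
Proof.
  intros Hq Hx.
  set (K := exp (Cmod (cpowR q (2 * nu)) / (1 - q ^ 2))).
  set (y := x ^ 2 / (1 - q ^ 2)).
  destruct (is_Clim_seq_summable_increments (fun n => csum n (hej_term q nu x))
              (fun k => K * (q ^ (k * (k + 1)) * y ^ k))) as [l Hl].
  - intros k. rewrite csum_S.
    replace (csum k (hej_term q nu x) + hej_term q nu x k - csum k (hej_term q nu x))%C
      with (hej_term q nu x k) by ring.
    unfold hej_term. rewrite Cmod_mult, Cmod_R, Rabs_pos_eq by (apply pow_le; lra).
    unfold y, Rdiv. rewrite Rpow_mult_distr, <- pow_mult, (Nat.mul_comm 2 k).
    assert (0 <= x ^ (k * 2)) by (apply pow_le; lra).
    eapply Rle_trans; [apply Rmult_le_compat_r; [assumption | now apply hej_coef_Cmod_le] |].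
    right. fold K. ring.
  - apply (ex_series_scal_l (K := R_AbsRing) (V := R_NormedModule) K
             (fun k => q ^ (k * (k + 1)) * y ^ k)).
    apply ex_series_q_gaussian; [assumption |].
    unfold y. apply Rdiv_lt_0_compat; nra.
  - unfold cseries. now rewrite (CLim_seq_correct _ _ Hl).
Qed.

Lemma hej_coef_pred_nu q nu k :
  0 < q < 1 ->
  hej_coef q (nu - 1) k = ((1 - cpowR q (2 * nu) * (q ^ (2 * k))%R) * hej_coef q nu k)%C.
Proof.
  intros Hq. unfold hej_coef.
  rewrite qpoch_inf_Sl by (split; [apply pow_le | ]; nra).
  replace (2 * (nu - 1) + RtoC (INR (2 * k + 2)))%C
    with (2 * nu + RtoC (INR (2 * k)))%C by solve_exponent.
  rewrite cpowR_add, !cpowR_INR, <- Cmult_assoc, <- RtoC_mult, <- pow_add by lra.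
  replace (cpowR q (2 * nu) * (q ^ (2 * k + 2))%R)%C
    with (cpowR q (2 * nu + RtoC (INR (2 * k + 2))))%C
    by (rewrite cpowR_add, cpowR_INR by lra; reflexivity).
  unfold Cdiv. ring.
Qed.

Lemma hej_coef_succ_k q nu k :
  0 < q < 1 ->
  (hej_coef q nu (S k) * (1 - (q ^ (2 * k + 2))%R))%C =
  (- ((q ^ (2 * k + 2))%R * hej_coef q (nu + 1) k))%C.
Proof.
  intros Hq. unfold hej_coef.
  replace (2 * nu + RtoC (INR (2 * S k + 2)))%C
    with (2 * (nu + 1) + RtoC (INR (2 * k + 2)))%C by solve_exponent.
  replace ((-1) ^ S k * q ^ (S k * (S k + 1)))
    with (- ((-1) ^ k * q ^ (k * (k + 1)) * q ^ (2 * k + 2))).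
  2:{ replace (S k * (S k + 1))%nat with (k * (k + 1) + (2 * k + 2))%nat by lia.
      rewrite (pow_add q (k * (k + 1))). simpl. ring. }
  rewrite qpoch_S, <- RtoC_mult, <- pow_mult, <- pow_add.
  replace (2 + 2 * k)%nat with (2 * k + 2)%nat by lia.
  rewrite RtoC_opp, !RtoC_mult.
  assert (H1 := qpoch_diag_neq0 (q ^ 2) k ltac:(nra)).
  assert (H2 := RtoC_one_minus_pow_neq0 q (2 * k + 2) Hq ltac:(lia)).
  field. auto.
Qed.

Lemma hej_term_pred_nu q nu x k :
  0 < q < 1 ->
  hej_term q (nu - 1) x k =
  ((1 - cpowR q (2 * nu)) * hej_term q nu x k
   + match k with
     | O => 0
     | S j => - (cpowR q (2 * nu) * (q ^ 2 * x ^ 2)%R) * hej_term q (nu + 1) (x * q) j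
     end)%C.
Proof.
  intros Hq. unfold hej_term. rewrite hej_coef_pred_nu by assumption.
  set (t := cpowR q (2 * nu)).
  destruct k as [|j]; [simpl; ring |].
  replace (2 * S j)%nat with (2 * j + 2)%nat by lia.
  transitivity ((1 - t) * hej_coef q nu (S j) * RtoC (x ^ (2 * j + 2))
                + t * (hej_coef q nu (S j) * (1 - (q ^ (2 * j + 2))%R))
                  * RtoC (x ^ (2 * j + 2)))%C; [ring |].
  rewrite hej_coef_succ_k by assumption.
  rewrite Rpow_mult_distr, !pow_add, !RtoC_mult. ring.
Qed.

Lemma hej_series_pred_nu q nu x :
  0 < q < 1 -> 0 < x ->
  cseries (hej_term q (nu - 1) x) =
  ((1 - cpowR q (2 * nu)) * cseries (hej_term q nu x)
   - cpowR q (2 * nu) * (q ^ 2 * x ^ 2)%R * cseries (hej_term q (nu + 1) (x * q)))%C.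
Proof.
  intros Hq Hx.
  set (t := cpowR q (2 * nu)).
  set (c := (- (t * (q ^ 2 * x ^ 2)%R))%C).
  assert (Hpartial : forall n,
    csum (S n) (hej_term q (nu - 1) x) =
    ((1 - t) * csum (S n) (hej_term q nu x) + c * csum n (hej_term q (nu + 1) (x * q)))%C).
  { intros n. rewrite (csum_ext _ _ _ (fun k _ => hej_term_pred_nu q nu x k Hq)).
    rewrite <- !csum_scal. fold t c.
    apply (csum_plus_shift n (fun k => (1 - t) * hej_term q nu x k)%C
                          (fun j => c * hej_term q (nu + 1) (x * q) j)%C). }
  assert (Hlim := is_Clim_seq_plus _ _ _ _
    (is_Clim_seq_scal (1 - t) _ _
       (proj1 (is_Clim_seq_incr_1 _ _) (hej_series_correct q nu x Hq Hx)))
    (is_Clim_seq_scal c _ _ (hej_series_correct q (nu + 1) (x * q) Hq ltac:(nra)))).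
  apply (is_Clim_seq_ext _ (fun n => csum (S n) (hej_term q (nu - 1) x)))
    in Hlim; [| intros n; symmetry; apply Hpartial].
  apply (is_Clim_seq_incr_1 (fun n => csum n (hej_term q (nu - 1) x))), CLim_seq_correct in Hlim.
  unfold cseries at 1. rewrite Hlim. unfold c. ring.
Qed.

Lemma HEJ_contiguous q nu y :
  0 < q < 1 -> 0 < y ->
  HEJ q (nu + 1) (y * q) =
  (((1 - cpowR q (2 * nu)) / y * HEJ q nu y - HEJ q (nu - 1) y) / (cpowR q nu * q))%C.
Proof.
  intros Hq Hy.
  rewrite !HEJ_series, hej_series_pred_nu by assumption.
  replace (RtoC (q ^ 2 * y ^ 2)) with (q * q * (y * y))%C
    by (rewrite <- !RtoC_mult; f_equal; ring).
  rewrite cpowR_mult_base, !cpowR_add, !cpowR_1 by lra.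
  replace (cpowR y nu) with (cpowR y (nu - 1) * y)%C
    by (rewrite <- (cpowR_1 y), <- cpowR_add by lra; f_equal; ring).
  replace (cpowR q (2 * nu)) with (cpowR q nu * cpowR q nu)%C
    by (rewrite <- cpowR_add; f_equal; ring).
  assert (Hu := cpowR_neq0 q nu).
  assert (Hyq : RtoC y <> 0%C) by (intros E; apply RtoC_inj in E; lra).
  assert (Hqq : RtoC q <> 0%C) by (intros E; apply RtoC_inj in E; lra).
  (* [(q^2;q^2)_oo] is kept inside an opaque factor: it is never divided out. *)
  unfold Cdiv. set (P := Cinv (qpoch_inf (RtoC (q ^ 2)) (q ^ 2))).
  field. auto.
Qed.

(** * The coefficients [a_i] and [b_j] *)

Definition coef_a_exp (nu : C) (m i : nat) : C :=
  (- (RtoC (INR m) * (RtoC (INR m) + nu)) + RtoC (INR i) * (RtoC (3 * INR i - 1) + nu))%C.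

Definition coef_a_poch (q : R) (t : C) (m i : nat) : C :=
  (RtoC ((-1) ^ i) * (qpoch t (q ^ 2) (m - i) * qpoch (RtoC (q ^ 2)) (q ^ 2) (m - i))
   / (qpoch (RtoC (q ^ 2)) (q ^ 2) i
      * (qpoch t (q ^ 2) i * qpoch (RtoC (q ^ 2)) (q ^ 2) (m - 2 * i))))%C.

Lemma coef_a_split q nu m i :
  coef_a q nu m i = (cpowR q (coef_a_exp nu m i) * coef_a_poch q (cpowR q (2 * nu)) m i)%C.
Proof. unfold coef_a, coef_a_exp, coef_a_poch. rewrite cpowR_add. ring. Qed.

Lemma coef_a_0_0 q nu : coef_a q nu 0 0 = 1%C.
Proof.
  unfold coef_a. simpl (0 - _)%nat.
  replace (- (RtoC (INR 0) * (RtoC (INR 0) + nu)))%C with (RtoC 0) by solve_exponent.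
  replace (RtoC (INR 0) * (RtoC (3 * INR 0 - 1) + nu))%C with (RtoC 0) by solve_exponent.
  rewrite cpowR_0. unfold qpoch, cprod. simpl. field.
Qed.

Section CoefPoch.

Variables (q : R) (t : C).
Hypothesis (Hq : 0 < q < 1) (Ht : forall k, (1 - t * ((q ^ 2) ^ k)%R)%C <> 0%C).

Local Notation Q := (q ^ 2)%R.

Lemma one_minus_t_neq0 : (1 - t)%C <> 0%C.
Proof. generalize (Ht 0). now rewrite pow_O, Cmult_1_r. Qed.

Lemma qpoch_t_neq0 n : qpoch t Q n <> 0%C.
Proof. now apply qpoch_neq0. Qed.

Lemma qpoch_Q_neq0 n : qpoch (RtoC Q) Q n <> 0%C.
Proof. apply qpoch_diag_neq0. nra. Qed.

Lemma one_minus_Q_pow_S_neq0 k : (1 - RtoC Q * (Q ^ k)%R)%C <> 0%C.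
Proof.
  intros E. apply (qpoch_Q_neq0 (S k)). rewrite qpoch_S, E. apply Cmult_0_r.
Qed.

Lemma coef_a_poch_scale i n :
  ((1 - (Q ^ (i + n + 1))%R) * (1 - t * (Q ^ i)%R) * coef_a_poch q (t * Q) (2 * i + n) i)%C =
  ((1 - (Q ^ (n + 1))%R) * coef_a_poch q t (2 * i + n + 1) i)%C.
Proof.
  unfold coef_a_poch.
  replace (2 * i + n - i)%nat with (i + n)%nat by lia.
  replace (2 * i + n - 2 * i)%nat with n by lia.
  replace (2 * i + n + 1 - i)%nat with (S (i + n)) by lia.
  replace (2 * i + n + 1 - 2 * i)%nat with (S n) by lia.
  rewrite !(qpoch_Sl_inv t) by exact one_minus_t_neq0.
  rewrite !qpoch_S.
  replace (i + n + 1)%nat with (S (i + n)) by lia. replace (n + 1)%nat with (S n) by lia.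
  rewrite <- !(tech_pow_Rmult Q), !RtoC_mult.
  generalize (qpoch_t_neq0 i) (qpoch_t_neq0 (i + n)) (qpoch_Q_neq0 i) (qpoch_Q_neq0 (i + n))
    (qpoch_Q_neq0 n) one_minus_t_neq0 (Ht i) (one_minus_Q_pow_S_neq0 n)
    (one_minus_Q_pow_S_neq0 (i + n)).
  intros. field. repeat split; auto.
Qed.

Lemma coef_a_poch_scale2 j n :
  ((1 - (Q ^ (j + 1 + n))%R) * (1 - t * (Q ^ (j + 1))%R)
   * - coef_a_poch q (t * Q * Q) (2 * j + n) j)%C =
  ((1 - t * (Q ^ (j + 1 + n))%R) * (1 - (Q ^ (j + 1))%R)
   * coef_a_poch q t (2 * j + 2 + n) (j + 1))%C.
Proof.
  assert (Ht1 : (1 - t * Q)%C <> 0%C) by (generalize (Ht 1); now rewrite pow_1).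
  unfold coef_a_poch.
  replace (2 * j + n - j)%nat with (j + n)%nat by lia.
  replace (2 * j + n - 2 * j)%nat with n by lia.
  replace (2 * j + 2 + n - (j + 1))%nat with (S (j + n)) by lia.
  replace (2 * j + 2 + n - 2 * (j + 1))%nat with n by lia.
  replace (j + 1 + n)%nat with (S (j + n)) by lia. replace (j + 1)%nat with (S j) by lia.
  rewrite !(qpoch_Sl_inv (t * Q)) by exact Ht1.
  rewrite !(qpoch_Sl_inv t) by exact one_minus_t_neq0.
  rewrite !qpoch_S, <- !(tech_pow_Rmult Q), !RtoC_mult.
  generalize (qpoch_t_neq0 j) (qpoch_t_neq0 (j + n)) (qpoch_Q_neq0 j) (qpoch_Q_neq0 (j + n))
    (qpoch_Q_neq0 n) one_minus_t_neq0 Ht1 (Ht j) (Ht (j + n)) (Ht (S j)) (one_minus_Q_pow_S_neq0 j)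
    (one_minus_Q_pow_S_neq0 (j + n)).
  rewrite <- (tech_pow_Rmult Q), RtoC_mult, Cmult_assoc. intros.
  replace ((-1) ^ S j) with (- (-1) ^ j) by (simpl; ring). rewrite RtoC_opp.
  field. repeat split; auto.
Qed.

End CoefPoch.

(** The hypothesis of the theorem; it keeps the factors [1 - q^(2 nu) q^(2k)] of
    the Pochhammer symbols in the denominators of [a_i] nonzero. *)
Definition nonresonant (q : R) (nu : C) : Prop :=
  forall i : nat, cpowR q (2 * nu + RtoC (2 * INR i))%C <> 1%C.

Lemma nonresonant_succ q nu : nonresonant q nu -> nonresonant q (nu + 1).
Proof.
  intros H i. replace (2 * (nu + 1) + RtoC (2 * INR i))%C
    with (2 * nu + RtoC (2 * INR (S i)))%C by solve_exponent.
  apply H.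
Qed.

Section CoefRecurrence.

Variables (q : R) (nu : C).
Hypothesis (Hq : 0 < q < 1) (Hnu : nonresonant q nu).

Local Notation Q := (q ^ 2)%R.
Local Notation t := (cpowR q (2 * nu)).
Local Notation u := (cpowR q nu).

Lemma nonresonant_factor_neq0 k : (1 - t * (Q ^ k)%R)%C <> 0%C.
Proof.
  intros E. apply (Hnu k).
  replace (RtoC (2 * INR k)) with (RtoC (INR (2 * k))) by (now rewrite mult_INR).
  rewrite cpowR_add, cpowR_INR, pow_mult by lra.
  replace (t * (Q ^ k)%R)%C with (1 - (1 - t * (Q ^ k)%R))%C by ring.
  rewrite E. ring.
Qed.

Lemma coef_a_succ_nu_ratio i n :
  ((1 - (Q ^ (i + n + 1))%R) * (1 - t * (Q ^ i)%R) * coef_a q (nu + 1) (2 * i + n) i)%C =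
  (u * (q ^ (3 * i + n + 1))%R * (1 - (Q ^ (n + 1))%R) * coef_a q nu (2 * i + n + 1) i)%C.
Proof.
  rewrite !coef_a_split, cpowR_2_succ by lra.
  replace (coef_a_exp (nu + 1) (2 * i + n) i)
    with (coef_a_exp nu (2 * i + n + 1) i + nu + RtoC (INR (3 * i + n + 1)))%C
    by (unfold coef_a_exp; solve_exponent).
  rewrite !cpowR_add, cpowR_INR by lra.
  transitivity (u * (q ^ (3 * i + n + 1))%R * cpowR q (coef_a_exp nu (2 * i + n + 1) i)
    * ((1 - (Q ^ (i + n + 1))%R) * (1 - t * (Q ^ i)%R) * coef_a_poch q (t * Q) (2 * i + n) i))%C;
    [ring |].
  rewrite coef_a_poch_scale by (exact Hq || exact nonresonant_factor_neq0). ring.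
Qed.

Lemma coef_b_succ_m_ratio j n :
  ((1 - (Q ^ (j + 1 + n))%R) * (1 - t * (Q ^ (j + 1))%R)
   * coef_b q (nu + 1) (2 * j + 1 + n) j)%C =
  ((q ^ n)%R * (1 - t * (Q ^ (j + 1 + n))%R) * (1 - (Q ^ (j + 1))%R)
   * coef_a q nu (2 * j + 2 + n) (j + 1))%C.
Proof.
  unfold coef_b. replace (2 * j + 1 + n - 1)%nat with (2 * j + n)%nat by lia.
  rewrite !coef_a_split, !cpowR_2_succ by lra.
  rewrite (Cmult_assoc (cpowR q _) (cpowR q _)), <- cpowR_add.
  replace (RtoC (2 * INR j - INR (2 * j + 1 + n)) - (nu + 1) + coef_a_exp (nu + 1 + 1) (2 * j + n) j)%C
    with (coef_a_exp nu (2 * j + 2 + n) (j + 1) + RtoC (INR n))%C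
    by (unfold coef_a_exp; solve_exponent).
  rewrite cpowR_add, cpowR_INR by lra.
  transitivity ((q ^ n)%R * cpowR q (coef_a_exp nu (2 * j + 2 + n) (j + 1))
    * ((1 - (Q ^ (j + 1 + n))%R) * (1 - t * (Q ^ (j + 1))%R)
       * - coef_a_poch q (t * Q * Q) (2 * j + n) j))%C; [ring |].
  rewrite coef_a_poch_scale2 by (exact Hq || exact nonresonant_factor_neq0). ring.
Qed.

Lemma one_minus_Q_pow_neq0 k : (0 < k)%nat -> (1 - (Q ^ k)%R)%C <> 0%C.
Proof. intros Hk. rewrite <- pow_mult. apply RtoC_one_minus_pow_neq0; [exact Hq | lia]. Qed.

Lemma coef_a_succ_m_first m :
  coef_a q nu (S m) 0 = (coef_a q (nu + 1) m 0 * (1 - t) / (u * (q ^ (m + 1))%R))%C.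
Proof.
  assert (R := coef_a_succ_nu_ratio 0 m).
  replace (2 * 0 + m + 1)%nat with (S m) in R by lia.
  replace (2 * 0 + m)%nat with m in R by lia.
  replace (3 * 0 + m + 1)%nat with (m + 1)%nat in R by lia.
  replace (0 + m + 1)%nat with (m + 1)%nat in R by lia.
  rewrite pow_O, Cmult_1_r in R.
  assert (Hu : u <> 0%C) by apply cpowR_neq0.
  assert (Hqm : RtoC (q ^ (m + 1)) <> 0%C) by (apply RtoC_pow_neq0; lra).
  assert (H1 := one_minus_Q_pow_neq0 (m + 1) ltac:(lia)).
  assert (H2 := nonresonant_factor_neq0 0). rewrite pow_O, Cmult_1_r in H2.
  symmetry in R. apply Cmult_eq_Cdiv in R; [rewrite R | auto using Cmult_neq_0].
  field. auto.
Qed.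

(** With [i = S j], after clearing denominators [field] is left with the identity
    [(1 - Q^(i+n+1)) (1 - t Q^i) = Q^i (1 - t) (1 - Q^(n+1)) + (1 - t Q^(i+n+1)) (1 - Q^i)]. *)
Lemma coef_a_succ_m_middle j n :
  coef_a q nu (S (2 * S j + n)) (S j) =
  (coef_a q (nu + 1) (2 * S j + n) (S j) * (1 - t) / (u * (q ^ (S j + n + 1))%R)
   + coef_b q (nu + 1) (2 * S j + n) j / (q ^ S n)%R)%C.
Proof.
  assert (R1 := coef_a_succ_nu_ratio (S j) n).
  assert (R2 := coef_b_succ_m_ratio j (S n)).
  replace (2 * j + 1 + S n)%nat with (2 * S j + n)%nat in R2 by lia.
  replace (2 * j + 2 + S n)%nat with (S (2 * S j + n)) in R2 by lia.
  replace (j + 1 + S n)%nat with (S j + n + 1)%nat in R2 by lia.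
  replace (j + 1)%nat with (S j) in R2 by lia.
  replace (2 * S j + n + 1)%nat with (S (2 * S j + n)) in R1 by lia.
  assert (Hu : u <> 0%C) by apply cpowR_neq0.
  assert (Hqk : forall k, RtoC (q ^ k) <> 0%C) by (intros k; apply RtoC_pow_neq0; lra).
  assert (HD1 := one_minus_Q_pow_neq0 (S j + n + 1) ltac:(lia)).
  assert (HD2 := nonresonant_factor_neq0 (S j)).
  apply Cmult_eq_Cdiv in R1; [rewrite R1 | auto using Cmult_neq_0].
  apply Cmult_eq_Cdiv in R2; [rewrite R2 | auto using Cmult_neq_0].
  replace ((q ^ 2) ^ (S j + n + 1)) with ((q ^ 2) ^ S j * (q ^ 2) ^ (n + 1)) in *
    by (rewrite <- pow_add; f_equal; lia).
  replace (q ^ (3 * S j + n + 1)) with ((q ^ 2) ^ S j * q ^ (S j + n + 1))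
    by (rewrite <- pow_mult, <- pow_add; f_equal; lia).
  replace (S n) with (n + 1)%nat by lia.
  rewrite !RtoC_mult in *. field. auto.
Qed.

Lemma coef_a_succ_m_last j : coef_a q nu (S (2 * j + 1)) (S j) = coef_b q (nu + 1) (2 * j + 1) j.
Proof.
  assert (R := coef_b_succ_m_ratio j 0).
  rewrite !Nat.add_0_r, pow_O, Cmult_1_l in R.
  replace (2 * j + 2)%nat with (S (2 * j + 1)) in R by lia.
  replace (j + 1)%nat with (S j) in R by lia.
  assert (H1 := one_minus_Q_pow_neq0 (S j) ltac:(lia)).
  assert (H2 := nonresonant_factor_neq0 (S j)).
  apply Cmult_eq_Cdiv in R; [rewrite R | auto using Cmult_neq_0].
  field. auto.
Qed.

Lemma coef_a_succ_m m i :
  (2 * i <= S m)%nat ->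
  coef_a q nu (S m) i =
  ((if (2 * i <=? m)%nat
    then coef_a q (nu + 1) m i * (1 - t) / (u * (q ^ (m - i + 1))%R)
    else 0)
   + match i with O => 0 | S j => coef_b q (nu + 1) m j / (q ^ (m - 1 - 2 * j))%R end)%C.
Proof.
  intros Hi. destruct i as [|j].
  - rewrite coef_a_succ_m_first, Nat.sub_0_r. simpl. ring.
  - destruct (Nat.leb_spec (2 * S j) m) as [Hm | Hm].
    + destruct (Nat.le_exists_sub (2 * S j) m Hm) as [n [-> _]].
      rewrite Nat.add_comm, coef_a_succ_m_middle.
      replace (2 * S j + n - S j + 1)%nat with (S j + n + 1)%nat by lia.
      replace (2 * S j + n - 1 - 2 * j)%nat with (S n) by lia.
      reflexivity.
    + assert (m = 2 * j + 1)%nat as -> by lia.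
      rewrite coef_a_succ_m_last, Nat.add_sub, Nat.sub_diag, pow_O.
      field.
Qed.

End CoefRecurrence.

Lemma coef_b_succ q nu i n :
  0 < q ->
  coef_b q nu (S (2 * i + n)) i =
  (- (coef_a q (nu + 1) (2 * i + n) i / (cpowR q nu * (q ^ (n + 1))%R)))%C.
Proof.
  intros Hq. unfold coef_b. replace (S (2 * i + n) - 1)%nat with (2 * i + n)%nat by lia.
  replace (cpowR q (RtoC (2 * INR i - INR (S (2 * i + n))) - nu))
    with (1 / (cpowR q nu * (q ^ (n + 1))%R))%C; [unfold Cdiv; ring |].
  symmetry. apply Cmult_eq_Cdiv.
  - apply Cmult_neq_0; [apply cpowR_neq0 | apply RtoC_pow_neq0; lra].
  - rewrite <- cpowR_INR, <- !cpowR_add, <- (cpowR_0 q) by assumption. f_equal. solve_exponent.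
Qed.

Definition HEJ_expansion (q : R) (nu : C) (m : nat) (x : R) : C :=
  (csum (m / 2 + 1) (fun i =>
     coef_a q nu m i / (x ^ (m - 2 * i))%R * HEJ q nu (x * q ^ i))
   + csum ((m + 1) / 2) (fun j =>
     coef_b q nu m j / (x ^ (m - 1 - 2 * j))%R * HEJ q (nu - 1) (x * q ^ j)))%C.

Section ExpansionStep.

Variables (q : R) (nu : C) (x : R).
Hypothesis (Hq : 0 < q < 1) (Hnu : nonresonant q nu) (Hx : 0 < x).

Local Notation t := (cpowR q (2 * nu)).
Local Notation u := (cpowR q nu).

Lemma expansion_term_a m i :
  (2 * i <= m)%nat ->
  (coef_a q (nu + 1) m i / ((x * q) ^ (m - 2 * i))%R * HEJ q (nu + 1) (x * q * q ^ i))%C =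
  (coef_a q (nu + 1) m i * (1 - t) / (u * (q ^ (m - i + 1))%R) / (x ^ (S m - 2 * i))%R
     * HEJ q nu (x * q ^ i)
   + coef_b q nu (S m) i / (x ^ (S m - 1 - 2 * i))%R * HEJ q (nu - 1) (x * q ^ i))%C.
Proof.
  intros Hi. destruct (Nat.le_exists_sub (2 * i) m Hi) as [n [-> _]].
  replace (x * q * q ^ i) with (x * q ^ i * q) by ring.
  rewrite HEJ_contiguous by (try apply Rmult_lt_0_compat; try apply pow_lt; lra).
  replace (n + 2 * i)%nat with (2 * i + n)%nat by lia.
  rewrite coef_b_succ by lra.
  replace (2 * i + n - 2 * i)%nat with n by lia.
  replace (2 * i + n - i + 1)%nat with (i + (n + 1))%nat by lia.
  replace (S (2 * i + n) - 2 * i)%nat with (n + 1)%nat by lia.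
  replace (S (2 * i + n) - 1 - 2 * i)%nat with n by lia.
  rewrite Rpow_mult_distr, !pow_add, !pow_1, !RtoC_mult.
  assert (Hu := cpowR_neq0 q nu).
  assert (forall k, RtoC (x ^ k) <> 0%C) by (intros; apply RtoC_pow_neq0; lra).
  assert (forall k, RtoC (q ^ k) <> 0%C) by (intros; apply RtoC_pow_neq0; lra).
  assert (RtoC x <> 0%C) by (intros E; apply RtoC_inj in E; lra).
  assert (RtoC q <> 0%C) by (intros E; apply RtoC_inj in E; lra).
  field. repeat split; auto.
Qed.

Lemma expansion_term_b m j :
  (2 * j + 1 <= m)%nat ->
  (coef_b q (nu + 1) m j / ((x * q) ^ (m - 1 - 2 * j))%R * HEJ q (nu + 1 - 1) (x * q * q ^ j))%C =
  (coef_b q (nu + 1) m j / (q ^ (m - 1 - 2 * j))%R / (x ^ (S m - 2 * S j))%R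
     * HEJ q nu (x * q ^ S j))%C.
Proof.
  intros Hj.
  replace (nu + 1 - 1)%C with nu by ring.
  replace (x * q * q ^ j) with (x * q ^ S j) by (simpl; ring).
  replace (S m - 2 * S j)%nat with (m - 1 - 2 * j)%nat by lia.
  rewrite Rpow_mult_distr, RtoC_mult.
  assert (RtoC (x ^ (m - 1 - 2 * j)) <> 0%C) by (apply RtoC_pow_neq0; lra).
  assert (RtoC (q ^ (m - 1 - 2 * j)) <> 0%C) by (apply RtoC_pow_neq0; lra).
  field. auto.
Qed.

Lemma expansion_term_a_succ m i :
  (2 * i <= S m)%nat ->
  (coef_a q nu (S m) i / (x ^ (S m - 2 * i))%R * HEJ q nu (x * q ^ i))%C =
  ((if (2 * i <=? m)%nat
    then coef_a q (nu + 1) m i * (1 - t) / (u * (q ^ (m - i + 1))%R) / (x ^ (S m - 2 * i))%R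
         * HEJ q nu (x * q ^ i)
    else 0)
   + match i with
     | O => 0
     | S j => coef_b q (nu + 1) m j / (q ^ (m - 1 - 2 * j))%R / (x ^ (S m - 2 * S j))%R
              * HEJ q nu (x * q ^ S j)
     end)%C.
Proof.
  intros Hi. rewrite coef_a_succ_m by assumption.
  destruct (2 * i <=? m)%nat, i; unfold Cdiv; ring.
Qed.

Lemma HEJ_expansion_succ m : HEJ_expansion q (nu + 1) m (x * q) = HEJ_expansion q nu (S m) x.
Proof.
  pose proof (Nat_half_bounds m). pose proof (Nat_half_bounds (m + 1)).
  pose proof (Nat_half_bounds (S m + 1)).
  unfold HEJ_expansion.
  rewrite (csum_ext (m / 2 + 1) _ _ (fun i Hi => expansion_term_a m i ltac:(lia))).
  rewrite (csum_ext ((m + 1) / 2) _ _ (fun j Hj => expansion_term_b m j ltac:(lia))).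
  replace (S m / 2 + 1)%nat with (S ((m + 1) / 2)) by (rewrite !Nat.add_1_r; reflexivity).
  replace ((S m + 1) / 2)%nat with (m / 2 + 1)%nat by lia.
  rewrite (csum_ext (S ((m + 1) / 2)) _ _
             (fun i Hi => expansion_term_a_succ m i ltac:(lia))).
  rewrite csum_plus_shift, (csum_if_trunc (m / 2 + 1)), csum_plus; [ring | lia |].
  intros i Hi. rewrite Nat.leb_le. lia.
Qed.

End ExpansionStep.

Lemma HEJ_expansion_0 q nu x : HEJ_expansion q nu 0 x = HEJ q nu x.
Proof.
  unfold HEJ_expansion. simpl (0 / 2 + 1)%nat. simpl ((0 + 1) / 2)%nat.
  rewrite csum_S. unfold csum. simpl. rewrite coef_a_0_0, Rmult_1_r. field.
Qed.

Theorem lemma4p4 (q : R) (hq0 : 0 < q) (hq1 : q < 1) (nu : C)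
  (hnu : forall i : nat,
     cpowR q (Cplus (Cmult (RtoC 2) nu) (RtoC (2 * INR i))) <> RtoC 1)
  (m : nat) (x : R) (hx : 0 < x) :
  HEJ q (Cplus nu (RtoC (INR m))) (x * q ^ m) =
  Cplus
    (csum (m / 2 + 1) (fun i =>
       Cmult (Cdiv (coef_a q nu m i) (RtoC (x ^ (m - 2 * i))))
             (HEJ q nu (x * q ^ i))))
    (csum ((m + 1) / 2) (fun j =>
       Cmult (Cdiv (coef_b q nu m j) (RtoC (x ^ (m - 1 - 2 * j))))
             (HEJ q (Cminus nu (RtoC 1)) (x * q ^ j)))).
Proof.
  change (HEJ q (nu + RtoC (INR m))%C (x * q ^ m) = HEJ_expansion q nu m x).
  assert (Hq : 0 < q < 1) by lra.
  change (nonresonant q nu) in hnu.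
  revert nu hnu x hx. induction m as [|m IH]; intros nu hnu x hx.
  - replace (nu + RtoC (INR 0))%C with nu by solve_exponent.
    now rewrite pow_O, Rmult_1_r, HEJ_expansion_0.
  - replace (nu + RtoC (INR (S m)))%C with (nu + 1 + RtoC (INR m))%C by solve_exponent.
    replace (x * q ^ S m) with (x * q * q ^ m) by (simpl; ring).
    rewrite IH by ((now apply nonresonant_succ) || nra).
    now apply HEJ_expansion_succ.
Qed.
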